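(* Let $W$ be a finite set of possible worlds, let $\Delta$ be a backbone (a sequence $U_1,\dots,U_n$ of subsets of $W$), and let $BA(\Delta)$ be the set of belief algebras on $W$ whose backbone is $\Delta$. Suppose $G_1,G_2\in BA(\Delta)$. Then: (1) $G_1\cap G_2\in BA(\Delta)$; (2) $\operatorname{Gen}(G_1\cup G_2)$ is a belief algebra, and $\operatorname{Gen}(G_1\cup G_2)\in BA(\Delta)$.
   Context: $W$ is a finite nonempty set; $R_W=\{(U,V)\mid U,V\subseteq W,\ U\cap V=\varnothing\}$. A belief algebra on $W$ is a pair $(2^W,\gg)$, $\gg$ a binary relation on $2^W$, such that for all $U,V,U_1,V_1,U_2,V_2\subseteq W$: (A0) $\gg\subseteq R_W$; (A1) $U\gg\varnothing$ iff $U\neq\varnothing$; (A2) $U\gg V$ implies not $V\gg U$; (A3) if $U_1\supseteq U$, $U\gg V$, $V\supseteq V_1$, $U_1\cap V_1=\varnothing$ then $U_1\gg V_1$; (A4) if $U=U_1\cup V_1=U_2\cup V_2$, $U_1\gg V_1$, $U_2\gg V_2$ then $U_1\cap U_2\gg V_1\cup V_2$. Belief algebras are identified with their relations as sets of pairs; $\cap,\cup$ refer to these sets. For $\Omega\subseteq R_W$, $\operatorname{Gen}(\Omega)$ is the smallest subset of $R_W$ that contains $\Omega$, contains $(U,\varnothing)$ for every nonempty $U\subseteq W$, and is closed under: if $(U,V)$ is in it, $U\subseteq U_1$, $V_1\subseteq V$, $U_1\cap V_1=\varnothing$ then $(U_1,V_1)$ is in it; if $U_1\cup V_1=U_2\cup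 V_2$ and $(U_1,V_1),(U_2,V_2)$ are in it then $(U_1\cap U_2,V_1\cup V_2)$ is in it. Every belief algebra $(2^W,\gg)$ has a unique backbone: a sequence $U_1,\dots,U_n$ of nonempty pairwise disjoint sets with union $W$, with $U_i\gg U_{i+1}$ for $i<n$, such that for each $i$ any two disjoint nonempty subsets $V_1,V_2$ of $U_i$ satisfy $(V_1,V_2)\notin\gg$ and $(V_2,V_1)\notin\gg$. *)

From mathcomp Require Import all_boot.
Set Implicit Arguments. Unset Strict Implicit. Unset Printing Implicit Defensive.

Definition brel (W : finType) := {set ({set W} * {set W})}.

Definition RW (W : finType) : brel W := [set p : {set W} * {set W} | [disjoint p.1 & p.2]].

Definition belief_algebra (W : finType) (G : brel W) : Prop :=
  G \subset RW W /\
  (forall U : {set W}, (U, set0) \in G <-> U != set0) /\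
  (forall U V : {set W}, (U, V) \in G -> (V, U) \notin G) /\
  (forall U V U1 V1 : {set W},
              U \subset U1 -> (U, V) \in G -> V1 \subset V ->
              [disjoint U1 & V1] -> (U1, V1) \in G) /\
  (forall U U1 V1 U2 V2 : {set W},
              U = U1 :|: V1 -> U = U2 :|: V2 ->
              (U1, V1) \in G -> (U2, V2) \in G ->
              (U1 :&: U2, V1 :|: V2) \in G).

Definition gen_closed (W : finType) (S : brel W) : bool :=
  [&& S \subset RW W,
      [forall U : {set W}, (U != set0) ==> ((U, set0) \in S)],
      [forall U : {set W}, forall V : {set W}, forall U1 : {set W}, forall V1 : {set W},
         [&& (U, V) \in S, U \subset U1, V1 \subset V & [disjoint U1 & V1]]
         ==> ((U1, V1) \in S)] &
      [forall U1 : {set W}, forall V1 : {set W}, forall U2 : {set W}, forall V2 : {set W},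
         [&& U1 :|: V1 == U2 :|: V2, (U1, V1) \in S & (U2, V2) \in S]
         ==> ((U1 :&: U2, V1 :|: V2) \in S)]].

(* Gen(Omega): the smallest subset of R_W containing Omega, all (U,set0) with U
   nonempty, and closed under the two rules: the intersection of all such sets
   (R_W itself is one such set whenever Omega is a subset of R_W). *)
Definition Gen (W : finType) (Omega : brel W) : brel W :=
  \bigcap_(S : brel W | gen_closed S && (Omega \subset S)) S.

Definition is_backbone (W : finType) (G : brel W) (Delta : seq {set W}) : Prop :=
  (forall i, i < size Delta -> nth set0 Delta i != set0) /\
  (forall i j, i < size Delta -> j < size Delta -> i != j ->
      [disjoint nth set0 Delta i & nth set0 Delta j]) /\
  \bigcup_(U <- Delta) U = [set: W] /\
  (forall i, i.+1 < size Delta -> (nth set0 Delta i, nth set0 Delta i.+1) \in G) /\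
  (forall i, i < size Delta -> forall V1 V2 : {set W},
      V1 \subset nth set0 Delta i -> V2 \subset nth set0 Delta i ->
      V1 != set0 -> V2 != set0 -> [disjoint V1 & V2] ->
      (V1, V2) \notin G /\ (V2, V1) \notin G).

Definition BA (W : finType) (Delta : seq {set W}) (G : brel W) : Prop :=
  belief_algebra G /\ is_backbone G Delta.

(* Rank each world by the index of its backbone layer, and let [maxBA D] relate
   U to V when they are disjoint and some world of U lies strictly below every
   world of V.  This relation obeys the closure rules defining Gen, is
   asymmetric, and contains every belief algebra G with backbone D: if (U, V)
   is in G but no world of U lies below the lowest layer k met by V, then A3
   and A4 against (layer k, layers above k) trace (U, V) on layer k, which
   relates two disjoint subsets of that layer, as the backbone forbids.  Hence
   Gen (G1 :|: G2) sits inside [maxBA D], which makes it a belief algebra whose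
   layers stay free; its backbone chain comes from G1. *)

From mathcomp Require Import all_boot zify.

Set Implicit Arguments.
Unset Strict Implicit.
Unset Printing Implicit Defensive.

Section BeliefAlgebras.
Variable W : finType.
Implicit Types (S H G Om : brel W).

Definition asymmetric S := forall U V : {set W}, (U, V) \in S -> (V, U) \notin S.

Lemma gen_closedP S : gen_closed S <->
  [/\ S \subset RW W,
      forall U : {set W}, U != set0 -> (U, set0) \in S,
      forall U V U1 V1 : {set W}, (U, V) \in S -> U \subset U1 -> V1 \subset V ->
         [disjoint U1 & V1] -> (U1, V1) \in S &
      forall U1 V1 U2 V2 : {set W}, U1 :|: V1 = U2 :|: V2 ->
         (U1, V1) \in S -> (U2, V2) \in S -> (U1 :&: U2, V1 :|: V2) \in S].
Proof.
split.
  case/and4P=> SR /forallP S1 /forallP S3 /forallP S4; split=> //.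
  - by move=> U; apply/implyP.
  - move=> U V U1 V1 UV UU1 V1V dis.
    move: (S3 U) => /forallP/(_ V)/forallP/(_ U1)/forallP/(_ V1)/implyP; apply.
    by rewrite UV UU1 V1V dis.
  - move=> U1 V1 U2 V2 eqU UV1 UV2.
    move: (S4 U1) => /forallP/(_ V1)/forallP/(_ U2)/forallP/(_ V2)/implyP; apply.
    by rewrite eqU eqxx UV1 UV2.
case=> SR S1 S3 S4; apply/and4P; split=> //.
- by apply/forallP=> U; apply/implyP/S1.
- apply/forallP=> U; apply/forallP=> V; apply/forallP=> U1; apply/forallP=> V1.
  by apply/implyP=> /and4P[]; apply: S3.
- apply/forallP=> U1; apply/forallP=> V1; apply/forallP=> U2; apply/forallP=> V2.
  by apply/implyP=> /and3P[/eqP]; apply: S4.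
Qed.

Lemma belief_algebraP S : belief_algebra S <->
  [/\ gen_closed S, asymmetric S & forall U, (U, set0) \in S -> U != set0].
Proof.
split.
  case=> A0 [A1 [A2 [A3 A4]]]; split=> //; last by move=> U /A1.
  apply/gen_closedP; split=> [|U /A1 //|U V U1 V1 UV UU1|U1 V1 U2 V2 eqU].
  - exact: A0.
  - exact: A3 UU1 UV.
  - exact: A4 (erefl _) eqU.
case=> /gen_closedP[A0 S1 A3 S4] A2 S0; split=> //.
split; first by move=> U; split=> [/S0 | /S1].
do 2!split=> //; first by move=> U V U1 V1 UU1 /A3; apply.
by move=> U U1 V1 U2 V2 -> eqU; apply: S4.
Qed.

Lemma belief_algebra_sub H S :
  belief_algebra H -> gen_closed S -> S \subset H -> belief_algebra S.
Proof.
case/belief_algebraP=> _ Hasym H0 Sgen /subsetP SH; apply/belief_algebraP.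
split=> // [U V /SH /Hasym | U /SH /H0 //].
by apply: contra => /SH.
Qed.

Lemma gen_closedI S1 S2 : gen_closed S1 -> gen_closed S2 -> gen_closed (S1 :&: S2).
Proof.
case/gen_closedP=> R1 E1 M1 J1 /gen_closedP[R2 E2 M2 J2]; apply/gen_closedP.
split=> [|U U0|U V U1 V1|U1 V1 U2 V2 eqU].
- exact: subset_trans (subsetIl _ _) R1.
- by rewrite in_setI E1 ?E2.
- rewrite !in_setI => /andP[UV1 UV2] UU1 V1V dis.
  by rewrite (M1 U V U1 V1 UV1 UU1 V1V dis) (M2 U V U1 V1 UV2 UU1 V1V dis).
- rewrite !in_setI => /andP[UV1 UV1'] /andP[UV2 UV2'].
  by rewrite (J1 U1 V1 U2 V2 eqU UV1 UV2) (J2 U1 V1 U2 V2 eqU UV1' UV2').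
Qed.

Lemma Gen_min Om S : gen_closed S -> Om \subset S -> Gen Om \subset S.
Proof. by move=> Sgen OmS; apply: bigcap_inf; rewrite Sgen OmS. Qed.

Lemma sub_Gen Om : Om \subset Gen Om.
Proof. by apply/subsetP=> p pOm; apply/bigcapP=> S /andP[_ /subsetP]; apply. Qed.

Lemma Gen_closed Om S : gen_closed S -> Om \subset S -> gen_closed (Gen Om).
Proof.
move=> Sgen OmS; have [SR _ _ _] := (gen_closedP S).1 Sgen.
have inGen p : (forall T, gen_closed T -> Om \subset T -> p \in T) -> p \in Gen Om.
  by move=> Tp; apply/bigcapP=> T /andP[/Tp]; apply.
apply/gen_closedP; split.
- exact: subset_trans (Gen_min Sgen OmS) SR.
- by move=> U U0; apply: inGen=> T /gen_closedP[_ T1 _ _] _; apply: T1.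
- move=> U V U1 V1 /bigcapP UV UU1 V1V dis.
  apply: inGen=> T Tgen OmT; have [_ _ T3 _] := (gen_closedP T).1 Tgen.
  by apply: T3 UU1 V1V dis; apply: UV; rewrite Tgen OmT.
- move=> U1 V1 U2 V2 eqU /bigcapP UV1 /bigcapP UV2.
  apply: inGen=> T Tgen OmT; have [_ _ _ T4] := (gen_closedP T).1 Tgen.
  by apply: T4 eqU _ _; [apply: UV1 | apply: UV2]; rewrite Tgen OmT.
Qed.

Lemma belief_algebraI G1 G2 :
  belief_algebra G1 -> belief_algebra G2 -> belief_algebra (G1 :&: G2).
Proof.
move=> ba1 /belief_algebraP[gen2 _ _]; have [gen1 _ _] := (belief_algebraP G1).1 ba1.
exact: belief_algebra_sub ba1 (gen_closedI gen1 gen2) (subsetIl _ _).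
Qed.

Definition chain_in G (D : seq {set W}) : Prop :=
  forall i, i.+1 < size D -> (nth set0 D i, nth set0 D i.+1) \in G.

Definition layers_free G (D : seq {set W}) : Prop :=
  forall i, i < size D -> forall V1 V2 : {set W},
    V1 \subset nth set0 D i -> V2 \subset nth set0 D i ->
    V1 != set0 -> V2 != set0 -> [disjoint V1 & V2] ->
    (V1, V2) \notin G /\ (V2, V1) \notin G.

Lemma is_backbone_sub H G D :
  is_backbone H D -> G \subset H -> chain_in G D -> is_backbone G D.
Proof.
case=> Dne [Ddisj [Dcov [_ Hfree]]] /subsetP GH Gchain; do 4!split=> //.
move=> i iD V1 V2 sV1 sV2 V1n V2n dis.
have [nH12 nH21] := Hfree i iD V1 V2 sV1 sV2 V1n V2n dis.
by split; apply: contra (GH _) _.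
Qed.

Lemma BA_setI D G1 G2 : BA D G1 -> BA D G2 -> BA D (G1 :&: G2).
Proof.
case=> ba1 bb1 [ba2 [_ [_ [_ [chain2 _]]]]]; have [_ [_ [_ [chain1 _]]]] := bb1.
split; first exact: belief_algebraI.
by apply: is_backbone_sub bb1 (subsetIl _ _) _ => i iD; rewrite inE chain1 ?chain2.
Qed.

End BeliefAlgebras.

Section Ranks.
Variable W : finType.
Variable D : seq {set W}.
Hypothesis Dne : forall i, i < size D -> nth set0 D i != set0.
Hypothesis Ddisj : forall i j, i < size D -> j < size D -> i != j ->
  [disjoint nth set0 D i & nth set0 D j].
Hypothesis Dcov : \bigcup_(U <- D) U = [set: W].

Definition rank (w : W) := find (fun X : {set W} => w \in X) D.

Lemma has_layer (w : W) : has (fun X : {set W} => w \in X) D.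
Proof.
have : w \in \bigcup_(U <- D) U by rewrite Dcov inE.
rewrite big_tnth => /bigcupP[i _ wi].
by apply/hasP; exists (tnth (in_tuple D) i) => //; apply: mem_tnth.
Qed.

Lemma rank_lt_size w : rank w < size D.
Proof. by rewrite -has_find has_layer. Qed.

Lemma mem_nth_rank w : w \in nth set0 D (rank w).
Proof. exact: nth_find (has_layer w). Qed.

Lemma rank_nth w i : i < size D -> w \in nth set0 D i -> rank w = i.
Proof.
move=> iD wi; apply/eqP; apply: contraTT wi => ne.
by rewrite (disjointFr (Ddisj (rank_lt_size w) iD ne) (mem_nth_rank w)).
Qed.

Definition layer k := [set w | rank w == k].
Definition layers_from k := [set w | k <= rank w].

Lemma layer_nth k : k < size D -> layer k = nth set0 D k.
Proof.
move=> kD; apply/setP=> w; rewrite inE.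
by apply/eqP/idP=> [<-|/(rank_nth kD)]; first exact: mem_nth_rank.
Qed.

Definition maxBA : brel W := [set p : {set W} * {set W} |
  [disjoint p.1 & p.2] && [exists u in p.1, [forall v in p.2, rank u < rank v]]].

Lemma maxBAP (U V : {set W}) : reflect ([disjoint U & V] /\
   exists2 u, u \in U & forall v, v \in V -> rank u < rank v) ((U, V) \in maxBA).
Proof.
rewrite inE; apply: (iffP andP) => [[dis /exists_inP[u uU /forall_inP]]|[dis [u uU uV]]].
  by split=> //; exists u.
by split=> //; apply/exists_inP; exists u=> //; apply/forall_inP.
Qed.

Lemma maxBA_closed : gen_closed maxBA.
Proof.
apply/gen_closedP; split.
- by apply/subsetP=> -[U V] /maxBAP[dis _]; rewrite inE.
- move=> U /set0Pn[u uU]; apply/maxBAP; split; first by rewrite -setI_eq0 setI0.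
  by exists u=> // v; rewrite inE.
- move=> U V U1 V1 /maxBAP[_ [u uU uV]] /subsetP UU1 /subsetP V1V dis.
  by apply/maxBAP; split=> //; exists u=> [|v /V1V]; [apply: UU1 | apply: uV].
move=> U1 V1 U2 V2 eqU /maxBAP[dis1 [u1 u1U u1V]] /maxBAP[dis2 [u2 u2U u2V]].
apply/maxBAP; split.
  rewrite -setI_eq0 setIUr setIAC (disjoint_setI0 dis1) set0I.
  by rewrite -setIA (disjoint_setI0 dis2) setI0 setU0.
clear dis1 dis2.
(* the lower of the two witnesses lies on both sides of the intersection *)
wlog le12 : U1 V1 U2 V2 u1 u2 eqU u1U u1V u2U u2V / rank u1 <= rank u2.
  move=> hwlog; case: (leqP (rank u1) (rank u2)) => [|/ltnW]; first exact: hwlog.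
  by move=> le21; rewrite setIC setUC; apply: hwlog le21.
have u1U2 : u1 \in U2.
  have : u1 \in U2 :|: V2 by rewrite -eqU inE u1U.
  by rewrite inE => /orP[//|/u2V]; rewrite ltnNge le12.
exists u1; first by rewrite inE u1U u1U2.
by move=> v; rewrite inE => /orP[/u1V //|/u2V]; apply: leq_ltn_trans.
Qed.

Lemma maxBA_belief_algebra : belief_algebra maxBA.
Proof.
apply/belief_algebraP; split; first exact: maxBA_closed.
  move=> U V /maxBAP[_ [u uU uV]]; apply/negP=> /maxBAP[_ [v vV vU]].
  by have := ltn_trans (uV v vV) (vU u uU); rewrite ltnn.
by move=> U /maxBAP[_ [u uU _]]; apply/set0Pn; exists u.
Qed.

Lemma maxBA_layer_free i (V1 V2 : {set W}) : i < size D ->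
  V1 \subset nth set0 D i -> V2 \subset nth set0 D i -> V2 != set0 ->
  (V1, V2) \notin maxBA.
Proof.
move=> iD /subsetP sV1 /subsetP sV2 /set0Pn[v vV]; apply/negP=> /maxBAP[_ [u uU uV]].
by have := uV v vV; rewrite (rank_nth iD (sV1 u uU)) (rank_nth iD (sV2 v vV)) ltnn.
Qed.

Lemma maxBA_backbone : is_backbone maxBA D.
Proof.
do 3!split=> //; split.
  move=> i iD; have /set0Pn[u ui] := Dne (ltnW iD); apply/maxBAP; split.
    exact: Ddisj (ltnW iD) iD (negbT (ltn_eqF (ltnSn i))).
  exists u=> // v vi; rewrite (rank_nth (ltnW iD) ui) (rank_nth iD vi) //.
move=> i iD V1 V2 sV1 sV2 V1n V2n _.
by split; [apply: maxBA_layer_free sV1 sV2 V2n | apply: maxBA_layer_free sV2 sV1 V1n].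
Qed.

Section BackboneSub.
Variable G : brel W.
Hypothesis Gba : belief_algebra G.
Hypothesis Gchain : chain_in G D.
Hypothesis Gfree : layers_free G D.

Lemma ba_layer_above k : k < size D -> (layer k, layers_from k.+1) \in G.
Proof.
have [_ [A1 [_ [A3 A4]]]] := Gba.
move Ed : (size D - k.+1) => d; elim: d k Ed => [|d IH] k Ed kD.
  have -> : layers_from k.+1 = set0.
    by apply/setP=> w; rewrite !inE; have := rank_lt_size w; lia.
  by apply/A1; rewrite layer_nth //; apply: Dne.
have k1D : k.+1 < size D by lia.
have rest1 := IH k.+1 ltac:(lia) k1D.
have chain := Gchain k1D; rewrite -(layer_nth kD) -(layer_nth k1D) in chain.
have a1 : (layer k :|: layers_from k.+2, layer k.+1) \in G.
  apply: A3 (subsetUl _ _) chain (subxx _) _.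
  by rewrite -setI_eq0; apply/eqP/setP=> x; rewrite !inE; lia.
have a2 : (layer k :|: layer k.+1, layers_from k.+2) \in G.
  apply: A3 (subsetUr _ _) rest1 (subxx _) _.
  by rewrite -setI_eq0; apply/eqP/setP=> x; rewrite !inE; lia.
have := A4 (layers_from k) _ _ _ _ _ _ a1 a2.
have -> : (layer k :|: layers_from k.+2) :&: (layer k :|: layer k.+1) = layer k.
  by apply/setP=> x; rewrite !inE; lia.
have -> : layer k.+1 :|: layers_from k.+2 = layers_from k.+1.
  by apply/setP=> x; rewrite !inE; lia.
by apply; apply/setP=> x; rewrite !inE; lia.
Qed.

Lemma ba_trace_layer k U V : k < size D -> (U, V) \in G ->
  U \subset layers_from k -> V \subset layers_from k ->
  (layer k :\: V, layer k :&: V) \in G.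
Proof.
have [A0 [_ [_ [A3 A4]]]] := Gba.
move=> kD UV /subsetP Uk /subsetP Vk.
have dUV : [disjoint U & V] by have := subsetP A0 _ UV; rewrite inE.
have a1 : (layers_from k :\: V, V) \in G.
  apply: A3 _ UV (subxx V) _; last by rewrite -setI_eq0 setIDAC setDIl setDv setI0.
  apply/subsetP=> u uU; rewrite inE Uk // andbT.
  by rewrite (disjointFr dUV uU).
have eqU : layers_from k :\: V :|: V = layer k :|: layers_from k.+1.
  apply/setP=> x; rewrite !inE; case xV: (x \in V); last by rewrite orbF; lia.
  by have := Vk x xV; rewrite inE orbT; lia.
have a2 := A4 _ _ _ _ _ (erefl _) eqU a1 (ba_layer_above kD).
apply: A3 _ a2 _ _.
- by apply/subsetP=> x; rewrite !inE => /andP[/andP[-> _] ->].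
- by apply/subsetP=> x; rewrite !inE => /andP[_ ->].
- by rewrite -setI_eq0 setIDAC setIA setIid setDIl setDv setI0.
Qed.

Lemma ba_set0l V : (set0, V) \notin G.
Proof.
have [_ [A1 [A2 _]]] := Gba.
have [->|Vn] := eqVneq V set0; first by apply/negP=> /A1; rewrite eqxx.
exact: A2 ((A1 V).2 Vn).
Qed.

Lemma ba_sub_maxBA : G \subset maxBA.
Proof.
have [A0 [A1 _]] := Gba.
apply/subsetP=> -[U V] UV; apply/maxBAP.
split; first by have := subsetP A0 _ UV; rewrite inE.
have [V0|/set0Pn[v0 v0V]] := eqVneq V set0.
  by move: UV; rewrite V0 => /A1/set0Pn[u uU]; exists u=> // v; rewrite inE.
have [w wV wmin] := arg_minnP rank v0V; set k := rank w in wmin.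
case: (pickP [pred u | (u \in U) && (rank u < k)]) => [u /andP[uU uk] | none].
  by exists u=> // v /wmin; apply: leq_trans.
have kD : k < size D := rank_lt_size w.
have Uk : U \subset layers_from k.
  by apply/subsetP=> u uU; have := none u; rewrite /= uU inE; lia.
have Vk : V \subset layers_from k by apply/subsetP=> v /wmin; rewrite inE.
have trace := ba_trace_layer kD UV Uk Vk.
have kVn : layer k :&: V != set0 by apply/set0Pn; exists w; rewrite !inE eqxx; exact: wV.
have [kV0|kVn'] := eqVneq (layer k :\: V) set0.
  by move: trace; rewrite kV0 (negbTE (ba_set0l _)).
have kDV : layer k :\: V \subset nth set0 D k by rewrite -layer_nth // subsetDl.
have kIV : layer k :&: V \subset nth set0 D k by rewrite -layer_nth // subsetIl.
have dis : [disjoint layer k :\: V & layer k :&: V].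
  by rewrite -setI_eq0 setIDAC setIA setIid setDIl setDv setI0.
by have [] := Gfree kD kDV kIV kVn' kVn dis; rewrite trace.
Qed.

End BackboneSub.
End Ranks.

Lemma BA_sub_maxBA W (D : seq {set W}) G : BA D G -> G \subset maxBA D.
Proof. by case=> ba [Dne [Ddisj [Dcov [chain free]]]]; apply: ba_sub_maxBA. Qed.

Lemma BA_Gen_setU W (D : seq {set W}) G1 G2 :
  BA D G1 -> BA D G2 -> BA D (Gen (G1 :|: G2)).
Proof.
move=> BA1 BA2; have [_ [Dne [Ddisj [Dcov [chain1 _]]]]] := BA1.
have maxBA_gen := maxBA_closed D.
have sub12 : G1 :|: G2 \subset maxBA D by rewrite subUset !BA_sub_maxBA.
have subGen := Gen_min maxBA_gen sub12.
split.
  exact: belief_algebra_sub (maxBA_belief_algebra D) (Gen_closed maxBA_gen sub12) subGen.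
apply: is_backbone_sub (maxBA_backbone Dne Ddisj Dcov) subGen _.
by move=> i iD; apply: (subsetP (sub_Gen _)); rewrite inE chain1.
Qed.

Theorem theorem2 (W : finType) (Delta : seq {set W}) (G1 G2 : brel W) :
  0 < #|W| ->
  BA Delta G1 -> BA Delta G2 ->
  BA Delta (G1 :&: G2) /\
  (belief_algebra (Gen (G1 :|: G2)) /\ BA Delta (Gen (G1 :|: G2))).
Proof.
move=> _ BA1 BA2; have BAGen := BA_Gen_setU BA1 BA2.
by split; [apply: BA_setI | split; first case: BAGen].
Qed.
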